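(* Let $G$ be a graph on $n$ vertices and let $\mathcal{C}$ be a clique geometry in $G$ such that every vertex belongs to at least $r\ge 2$ and at most $R$ members of $\mathcal{C}$, and every member of $\mathcal{C}$ has order at least $\ell$. Then \[ \ell \le \frac{R}{\sqrt{r(r-1)}}\sqrt{n}. \]
   Context: The order of a clique is its number of vertices. A collection $\mathcal{C}$ of cliques of a graph is a clique geometry if (i) every clique in $\mathcal{C}$ is a maximal clique and (ii) every pair of adjacent vertices belongs to exactly one member of $\mathcal{C}$. *)

From mathcomp Require Import all_boot all_order all_algebra.
Set Implicit Arguments. Unset Strict Implicit. Unset Printing Implicit Defensive.

Definition simple_graph (T : finType) (e : rel T) : Prop :=
  irreflexive e /\ symmetric e.

Definition is_clique (T : finType) (e : rel T) (K : {set T}) : Prop :=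
  forall x y, x \in K -> y \in K -> x != y -> e x y.

Definition is_maximal_clique (T : finType) (e : rel T) (K : {set T}) : Prop :=
  is_clique e K /\ forall K' : {set T}, is_clique e K' -> K \subset K' -> K' = K.

Definition clique_geometry (T : finType) (e : rel T) (C : {set {set T}}) : Prop :=
  (forall K, K \in C -> is_maximal_clique e K) /\
  (forall x y, e x y -> exists! K, K \in C /\ x \in K /\ y \in K).

Definition nb_cliques_at (T : finType) (C : {set {set T}}) (x : T) : nat :=
  #|[set K in C | x \in K]|.

From mathcomp Require Import all_boot all_order all_algebra.
Import Order.TTheory GRing.Theory Num.Theory.

Set Implicit Arguments.
Unset Strict Implicit.
Unset Printing Implicit Defensive.

(* Double counting. Two distinct members of a clique geometry share at most
   one vertex, since two common vertices would be adjacent and hence lie in a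
   unique member. Counting triples (x, K1, K2) with K1 <> K2 both through x
   gives n r (r - 1) <= |C|^2, counting incidences gives |C| l <= n R, and
   together r (r - 1) l^2 <= n R^2. *)

Section Counting.
Local Open Scope nat_scope.

Lemma sum_distinct_pairs (X : finType) (A : {set X}) :
  \sum_(a in A) \sum_(b in A | b != a) 1 = #|A| * (#|A| - 1).
Proof.
rewrite -sum_nat_const; apply: eq_bigr => a aA.
rewrite sum1_card (cardsD1 a A) aA addKn.
by apply: eq_card => b; rewrite !inE andbC.
Qed.

Lemma mul_sqr_le n m q l R :
  0 < n -> n * q <= m ^ 2 -> m * l <= n * R -> q * l ^ 2 <= n * R ^ 2.
Proof.
move=> n_gt0 le_qm le_ml.
rewrite -(leq_pmul2l n_gt0) mulnA.
apply: leq_trans (leq_mul le_qm (leqnn _)) _.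
by rewrite -expnMn mulnA mulnn -expnMn leq_sqr.
Qed.

Variables (T : finType) (C : {set {set T}}).

Lemma nb_cliques_atE x : nb_cliques_at C x = \sum_(K in C | x \in K) 1.
Proof. by rewrite /nb_cliques_at sum1_card; apply: eq_card => K; rewrite inE. Qed.

Lemma sum_nb_cliques_at : \sum_x nb_cliques_at C x = \sum_(K in C) #|K|.
Proof.
under eq_bigr do rewrite nb_cliques_atE.
rewrite (exchange_big_dep (mem C)) /=; last by move=> x K _ /andP[].
by apply: eq_bigr => K KC; rewrite sum1_card; apply: eq_card => x; rewrite /= KC.
Qed.

Lemma sum_nb_cliques_at_pairs :
  \sum_x nb_cliques_at C x * (nb_cliques_at C x - 1) =
  \sum_(K1 in C) \sum_(K2 in C | K2 != K1) #|K1 :&: K2|.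
Proof.
under eq_bigr do rewrite -sum_distinct_pairs.
rewrite (exchange_big_dep (mem C)) /=; last by move=> x K _; rewrite inE => /andP[].
apply: eq_bigr => K1 K1C.
rewrite (exchange_big_dep (fun K2 => (K2 \in C) && (K2 != K1))) /=; last first.
  by move=> x K2 _ /andP[]; rewrite inE => /andP[-> _] ->.
apply: eq_bigr => K2 /andP[K2C K21]; rewrite sum1_card.
by apply: eq_card => x; rewrite -topredE /= !inE K1C K2C K21 andbT.
Qed.

Lemma card_family_mul_le (l R : nat) :
  (forall x, nb_cliques_at C x <= R) -> (forall K, K \in C -> l <= #|K|) ->
  #|C| * l <= #|T| * R.
Proof.
move=> le_nbR le_lK.
rewrite -sum_nat_const.
apply: (@leq_trans (\sum_(K in C) #|K|)); first exact: leq_sum.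
rewrite -sum_nb_cliques_at.
apply: (@leq_trans (\sum_x R)); first exact: leq_sum.
by rewrite sum_nat_const.
Qed.

End Counting.

Section CliqueGeometry.
Local Open Scope nat_scope.
Variables (T : finType) (e : rel T) (C : {set {set T}}).
Hypothesis geoC : clique_geometry e C.

Lemma clique_geometry_meet_le1 K1 K2 :
  K1 \in C -> K2 \in C -> K1 != K2 -> #|K1 :&: K2| <= 1.
Proof.
move=> K1C K2C neqK; apply/card_le1_eqP => x y.
rewrite !inE => /andP[xK1 xK2] /andP[yK1 yK2].
apply/eqP/contraT => neqxy.
have [[cliqueK1 _] [_ uniq_meet]] := (geoC.1 _ K1C, geoC).
have [K [_ uniqK]] := uniq_meet y x (cliqueK1 _ _ yK1 xK1 neqxy).
have eqK1 := uniqK K1 (conj K1C (conj yK1 xK1)).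
have eqK2 := uniqK K2 (conj K2C (conj yK2 xK2)).
by rewrite -eqK1 -eqK2 eqxx in neqK.
Qed.

Lemma clique_geometry_sum_meet_le :
  \sum_(K1 in C) \sum_(K2 in C | K2 != K1) #|K1 :&: K2| <= #|C| * (#|C| - 1).
Proof.
rewrite -sum_distinct_pairs; apply: leq_sum => K1 K1C.
apply: leq_sum => K2 /andP[K2C neqK].
by apply: clique_geometry_meet_le1; rewrite // eq_sym.
Qed.

Lemma clique_geometry_card_lb (r : nat) :
  (forall x, r <= nb_cliques_at C x) -> #|T| * (r * (r - 1)) <= #|C| * (#|C| - 1).
Proof.
move=> le_rnb.
have -> : #|T| * (r * (r - 1)) = \sum_(x : T) r * (r - 1) by rewrite sum_nat_const.
apply: (@leq_trans (\sum_(x : T) nb_cliques_at C x * (nb_cliques_at C x - 1))).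
  by apply: leq_sum => x _; rewrite leq_mul ?leq_sub2r.
by rewrite sum_nb_cliques_at_pairs clique_geometry_sum_meet_le.
Qed.

Lemma clique_geometry_order_bound (r R l : nat) :
  0 < #|T| -> (forall x, r <= nb_cliques_at C x <= R) ->
  (forall K, K \in C -> l <= #|K|) -> r * (r - 1) * l ^ 2 <= #|T| * R ^ 2.
Proof.
move=> T_gt0 nb_bounds le_lK.
have nb_ge x : r <= nb_cliques_at C x by case/andP: (nb_bounds x).
have nb_le x : nb_cliques_at C x <= R by case/andP: (nb_bounds x).
apply: mul_sqr_le T_gt0 _ (card_family_mul_le nb_le le_lK).
apply: leq_trans (clique_geometry_card_lb nb_ge) _.
by rewrite -mulnn leq_mul ?leq_subr.
Qed.

End CliqueGeometry.

Local Open Scope ring_scope.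

Lemma ler_nat_div_sqrt (F : rcfType) (a b c n : nat) :
  (0 < b)%N -> (b * a ^ 2 <= n * c ^ 2)%N ->
  (a%:R : F) <= c%:R / Num.sqrt b%:R * Num.sqrt n%:R.
Proof.
move=> b_gt0 le_bn.
have sqrtb_gt0 : (0 : F) < Num.sqrt b%:R by rewrite sqrtr_gt0 ltr0n.
rewrite mulrAC ler_pdivlMr // -(ler_pXn2r (n := 2)) ?nnegrE ?mulr_ge0 ?sqrtr_ge0 //.
by rewrite !exprMn !sqr_sqrtr // -!natrX -!natrM ler_nat mulnC [(c ^ 2 * n)%N]mulnC.
Qed.

Theorem lemma10 (F : rcfType) (T : finType) (e : rel T) (C : {set {set T}})
    (r R l : nat) :
  simple_graph e ->
  (0 < #|T|)%N ->
  clique_geometry e C ->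
  (2 <= r)%N ->
  (forall x : T, r <= nb_cliques_at C x <= R)%N ->
  (forall K, K \in C -> l <= #|K|)%N ->
  (l%:R : F) <= R%:R / Num.sqrt ((r * (r - 1))%:R) * Num.sqrt (#|T|%:R).
Proof.
move=> _ T_gt0 geoC le2r nb_bounds le_lK.
apply: ler_nat_div_sqrt; first by rewrite muln_gt0 subn_gt0 (leq_trans _ le2r).
exact: (clique_geometry_order_bound geoC T_gt0 nb_bounds le_lK).
Qed.
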